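(* Let $\mathbb{F}$ be a field, $\prec$ a term order on the monomials of $\mathbb{F}[x_1,\ldots,x_n]$, $\mathcal{F}\subseteq\mathbb{F}^n$ a finite set, $h\in\mathbb{F}^n\setminus\mathcal{F}$, and $\mathcal{T}:=\mathcal{F}\cup\{h\}$. Let $\{g_1,\ldots,g_s\}$ be the reduced Gröbner basis of $I(\mathcal{F})$ with respect to $\prec$, indexed so that $\mathrm{lm}_\prec(g_1)\prec\cdots\prec\mathrm{lm}_\prec(g_s)$, and let $i:=\min\{j:g_j(h)\ne0\}$. Let $\chi_h:\mathcal{T}\to\mathbb{F}$ be given by $\chi_h(h)=1$ and $\chi_h(f)=0$ for $f\in\mathcal{F}$. Then $\chi_h(t)=\frac{1}{g_i(h)}g_i(t)$ for all $t\in\mathcal{T}$, and $\frac{1}{g_i(h)}g_i$ is a linear combination of monomials in $\mathrm{Sm}(\prec,\mathcal{T})$; i.e. it is the unique expansion of $\chi_h$ as a linear combination of standard monomials of $I(\mathcal{T})$.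
   Context: $I(\mathcal{F})$ is the ideal of polynomials vanishing on $\mathcal{F}$; $\mathrm{Sm}(\prec,\mathcal{T})$ is the set of monomials that are not leading monomials of nonzero elements of $I(\mathcal{T})$. A reduced Gröbner basis is a Gröbner basis whose elements have leading coefficient 1 and none of whose monomials is divisible by the leading monomial of another element. *)

From HB Require Import structures.
From mathcomp Require Import all_boot all_order all_algebra.
From Stdlib Require Import ClassicalEpsilon.
Set Implicit Arguments. Unset Strict Implicit. Unset Printing Implicit Defensive.
Import Order.TTheory GRing.Theory Num.Theory.
Local Open Scope ring_scope.

Definition mono (n : nat) := n.-tuple nat.
Definition mone (n : nat) : mono n := [tuple 0%N | _ < n].
Definition mmul (n : nat) (a b : mono n) : mono n :=
  [tuple (tnth a i + tnth b i)%N | i < n].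
Definition mdiv (n : nat) (a b : mono n) : bool :=
  [forall i, tnth a i <= tnth b i]%N.

Definition term_order (n : nat) (lt : rel (mono n)) : Prop :=
  [/\ irreflexive lt, transitive lt,
      (forall a b, a != b -> lt a b || lt b a),
      (forall a b c, lt a b -> lt (mmul a c) (mmul b c)) &
      (forall a, a != mone n -> lt (mone n) a)].

Record mpoly (n : nat) (F : fieldType) := MPoly {
  coef : mono n -> F;
  coef_fin : exists s : seq (mono n), forall m, coef m != 0 -> m \in s }.

Definition msupp (n : nat) (F : fieldType) (p : mpoly n F) : seq (mono n) :=
  undup [seq m <- proj1_sig (constructive_indefinite_description _ (coef_fin p))
        | coef p m != 0].

Definition meval (n : nat) (F : fieldType) (p : mpoly n F) (x : 'rV[F]_n) : F :=
  \sum_(m <- msupp p) coef p m * \prod_(i < n) x ord0 i ^+ tnth m i.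

Definition vanishes (n : nat) (F : fieldType) (S : seq 'rV[F]_n) (p : mpoly n F) :=
  forall t, t \in S -> meval p t = 0.

Definition lead_mono (n : nat) (F : fieldType) (lt : rel (mono n))
    (p : mpoly n F) (m : mono n) : Prop :=
  coef p m != 0 /\ forall m', coef p m' != 0 -> m' != m -> lt m' m.

Definition standard_mono (n : nat) (F : fieldType) (lt : rel (mono n))
    (S : seq 'rV[F]_n) (m : mono n) : Prop :=
  forall p : mpoly n F, vanishes S p -> ~ lead_mono lt p m.

Definition groebner (n : nat) (F : fieldType) (lt : rel (mono n))
    (S : seq 'rV[F]_n) (gs : seq (mpoly n F)) : Prop :=
  (forall g, List.In g gs -> vanishes S g) /\
  (forall f : mpoly n F, vanishes S f -> (exists m, coef f m != 0) ->
     exists2 g, List.In g gs &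
       exists mf mg, [/\ lead_mono lt f mf, lead_mono lt g mg & mdiv mg mf]).

(* gs (listed as g_0,...,g_{s-1}) is a reduced Groebner basis of I(S) *)
Definition reduced_groebner (n : nat) (F : fieldType) (lt : rel (mono n))
    (S : seq 'rV[F]_n) (gs : seq (mpoly n F)) : Prop :=
  [/\ groebner lt S gs,
      (forall g, List.In g gs -> exists m, lead_mono lt g m /\ coef g m = 1) &
      (forall j k (z : mpoly n F), (j < size gs)%N -> (k < size gs)%N -> j != k ->
         forall m mk, lead_mono lt (nth z gs k) mk ->
           coef (nth z gs j) m != 0 -> ~~ mdiv mk m)].

From mathcomp Require Import all_boot all_order all_algebra.
From Stdlib Require Import ClassicalEpsilon Classical.
Import GRing.Theory.
Local Open Scope ring_scope.
Set Implicit Arguments. Unset Strict Implicit.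

(** A term order is well founded (Dickson's lemma), so division by a Groebner
   basis of I(F) terminates; run on an f in I(F) with f(h) <> 0 it exhibits a
   basis element g_j with lm(g_j) <= lm(f) and g_j(h) <> 0.  A polynomial
   separating h from F shows that the index i exists.  If a monomial m of g_i
   were lm(q) for some q in I(T), then q lies in I(F), so reducedness forces
   m = lm(g_i), and q - q_m g_i is an element of I(F) not vanishing at h whose
   leading monomial is smaller than lm(g_i), contradicting the minimality of i.
   Finally a polynomial supported on standard monomials of I(T) and vanishing
   on T is zero, which gives uniqueness. *)

Definition msub (n : nat) (a b : mono n) : mono n :=
  [tuple (tnth a i - tnth b i)%N | i < n].

Definition munit (n : nat) (i : 'I_n) : mono n := [tuple nat_of_bool (j == i) | j < n].

Lemma mmulC n (a b : mono n) : mmul a b = mmul b a.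
Proof. by apply: eq_from_tnth => i; rewrite !tnth_mktuple addnC. Qed.

Lemma mmulm1 n (a : mono n) : mmul a (mone n) = a.
Proof. by apply: eq_from_tnth => i; rewrite !tnth_mktuple addn0. Qed.

Lemma msubK n (a b : mono n) : mdiv b a -> mmul (msub a b) b = a.
Proof. by move/forallP => ba; apply: eq_from_tnth => i; rewrite !tnth_mktuple subnK. Qed.

Lemma mmulK n (a b : mono n) : msub (mmul a b) b = a.
Proof. by apply: eq_from_tnth => i; rewrite !tnth_mktuple addnK. Qed.

Lemma mdiv_mmul n (a b : mono n) : mdiv b (mmul a b).
Proof. by apply/forallP => i; rewrite tnth_mktuple leq_addl. Qed.

Lemma mmul_injl n (c : mono n) : injective (fun a => mmul a c).
Proof. by move=> a b /= eq_ab; rewrite -(mmulK a c) eq_ab mmulK. Qed.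

(** * Dickson's lemma *)

Lemma exists_min_after (f : nat -> nat) a :
  exists j, (a < j)%N /\ forall j', (a < j')%N -> (f j <= f j')%N.
Proof.
apply: NNPP => no_min.
suff all_ge v j : (a < j)%N -> (v <= f j)%N.
  by have := all_ge (f a.+1).+1 a.+1 (ltnSn a); rewrite ltnn.
elim: v j => [//|v IH] j aj; rewrite ltn_neqAle IH // andbT.
apply/negP => /eqP fj; apply: no_min; exists j; split => // j' aj'.
by rewrite -fj IH.
Qed.

Lemma nondecreasing_subseq (f : nat -> nat) :
  exists phi : nat -> nat,
    (forall k, phi k < phi k.+1)%N /\ (forall k, f (phi k) <= f (phi k.+1))%N.
Proof.
pose next a := sval (constructive_indefinite_description _ (exists_min_after f a)).
have nextP a : (a < next a)%N /\ forall j, (a < j)%N -> (f (next a) <= f j)%N.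
  exact: svalP (constructive_indefinite_description _ (exists_min_after f a)).
pose phi := fix phi k := if k is k'.+1 then next (phi k') else next 0%N.
have phi_incr k : (phi k < phi k.+1)%N by exact: (nextP _).1.
exists phi; split => // -[|k] /=; apply: (nextP _).2.
  exact: ltn_trans (nextP 0%N).1 (phi_incr 0%N).
exact: ltn_trans (phi_incr k) (phi_incr k.+1).
Qed.

Lemma dickson_coords n (f : nat -> mono n) d :
  exists phi : nat -> nat, (forall k, phi k < phi k.+1)%N /\
    forall i : 'I_n, (i < d)%N -> forall k, (tnth (f (phi k)) i <= tnth (f (phi k.+1)) i)%N.
Proof.
elim: d => [|d [phi [phi_incr phi_le]]]; first by exists id.
have [dn|nd] := ltnP d n; last first.
  exists phi; split => // i; rewrite ltnS leq_eqVlt => /orP [/eqP i_d|]; last exact: phi_le.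
  by move: (ltn_ord i); rewrite i_d ltnNge nd.
have [psi [psi_incr psi_le]] := nondecreasing_subseq (fun k => tnth (f (phi k)) (Ordinal dn)).
exists (phi \o psi); split => [k|i]; first exact: homo_ltn ltn_trans phi_incr _ _ (psi_incr k).
rewrite ltnS leq_eqVlt => /orP [/eqP i_d|id] k.
  by rewrite (_ : i = Ordinal dn); [exact: psi_le | exact: val_inj].
exact: (homo_leq (f := fun k => tnth (f (phi k)) i) leqnn leq_trans (phi_le i id))
  _ _ (ltnW (psi_incr k)).
Qed.

Lemma dickson n (f : nat -> mono n) : exists i j, (i < j)%N /\ mdiv (f i) (f j).
Proof.
have [phi [phi_incr phi_le]] := dickson_coords f n.
by exists (phi 0%N), (phi 1%N); split; [exact: phi_incr | apply/forallP => i; apply: phi_le].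
Qed.

(** * Polynomials *)

Definition mono_at (n : nat) (F : fieldType) (x : 'rV[F]_n) (m : mono n) : F :=
  \prod_(i < n) x ord0 i ^+ tnth m i.

Lemma mono_at_mmul n (F : fieldType) (x : 'rV[F]_n) a b :
  mono_at x (mmul a b) = mono_at x a * mono_at x b.
Proof. by rewrite /mono_at -big_split; apply: eq_bigr => i _; rewrite tnth_mktuple exprD. Qed.

Lemma mono_at_munit n (F : fieldType) (x : 'rV[F]_n) i : mono_at x (munit i) = x ord0 i.
Proof.
rewrite /mono_at (bigD1 i) //= big1 ?mulr1; first by rewrite tnth_mktuple eqxx expr1.
by move=> j /negbTE ji; rewrite tnth_mktuple ji expr0.
Qed.

Section Polynomials.
Variables (n : nat) (F : fieldType).
Implicit Types (p q : mpoly n F) (x : 'rV[F]_n).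

Lemma mem_msupp p m : (m \in msupp p) = (coef p m != 0).
Proof.
rewrite /msupp mem_undup mem_filter.
case: (constructive_indefinite_description _ _) => s supp_s /=.
by case pm: (coef p m != 0) => //=; apply: supp_s; rewrite pm.
Qed.

Lemma meval_seq p (s : seq (mono n)) x :
  uniq s -> (forall m, coef p m != 0 -> m \in s) ->
  meval p x = \sum_(m <- s) coef p m * mono_at x m.
Proof.
move=> s_uniq supp_s; rewrite /meval [RHS](bigID (fun m => coef p m != 0)) /=.
rewrite [X in _ = _ + X]big1 ?addr0 => [|m /negbNE/eqP->]; last by rewrite mul0r.
rewrite -[in RHS]big_filter; apply: perm_big; apply: uniq_perm.
- exact: undup_uniq.
- exact: filter_uniq.
move=> m; rewrite mem_msupp mem_filter; case pm: (coef p m != 0) => //=.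
by rewrite supp_s ?pm.
Qed.

Lemma meval_neq0_coef p x : meval p x != 0 -> exists m, coef p m != 0.
Proof.
rewrite /meval; case: (msupp p) (mem_msupp p) => [|m s] supp; first by rewrite big_nil eqxx.
by exists m; rewrite -supp mem_head.
Qed.

Lemma lin_supp (a b : F) p q m :
  a * coef p m + b * coef q m != 0 -> (coef p m != 0) || (coef q m != 0).
Proof.
by apply: contraNT; rewrite negb_or => /andP[/negbNE/eqP-> /negbNE/eqP->]; rewrite !mulr0 addr0.
Qed.

Lemma lin_fin (a b : F) p q :
  exists s : seq (mono n), forall m, a * coef p m + b * coef q m != 0 -> m \in s.
Proof. by exists (msupp p ++ msupp q) => m /lin_supp; rewrite mem_cat !mem_msupp. Qed.

Definition lin (a b : F) p q : mpoly n F := MPoly (lin_fin a b p q).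

Lemma coef_lin (a b : F) p q m : coef (lin a b p q) m = a * coef p m + b * coef q m.
Proof. by []. Qed.

Lemma meval_lin (a b : F) p q x : meval (lin a b p q) x = a * meval p x + b * meval q x.
Proof.
pose s := undup (msupp p ++ msupp q).
have s_uniq : uniq s by exact: undup_uniq.
have supp_s m : (coef p m != 0) || (coef q m != 0) -> m \in s.
  by rewrite mem_undup mem_cat !mem_msupp.
have supp_lin m : coef (lin a b p q) m != 0 -> m \in s by move/lin_supp/supp_s.
have supp_p m : coef p m != 0 -> m \in s by move=> pm; apply: supp_s; rewrite pm.
have supp_q m : coef q m != 0 -> m \in s by move=> qm; apply: supp_s; rewrite qm orbT.
rewrite (meval_seq x s_uniq supp_lin) (meval_seq x s_uniq supp_p) (meval_seq x s_uniq supp_q).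
rewrite !mulr_sumr -big_split; apply: eq_bigr => m _.
by rewrite coef_lin mulrDl !mulrA.
Qed.

Lemma mulX_fin (c : mono n) p :
  exists s : seq (mono n), forall m,
    (if mdiv c m then coef p (msub m c) else 0) != 0 -> m \in s.
Proof.
exists (map (fun a => mmul a c) (msupp p)) => m.
case: ifP => [cm pm|_]; last by rewrite eqxx.
by apply/mapP; exists (msub m c); rewrite ?mem_msupp ?msubK.
Qed.

Definition mulX (c : mono n) p : mpoly n F := MPoly (mulX_fin c p).

Lemma coef_mulX (c : mono n) p m :
  coef (mulX c p) m = if mdiv c m then coef p (msub m c) else 0.
Proof. by []. Qed.

Lemma coef_mulX_mmul (c : mono n) p m : coef (mulX c p) (mmul m c) = coef p m.
Proof. by rewrite coef_mulX mdiv_mmul mmulK. Qed.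

Lemma meval_mulX (c : mono n) p x : meval (mulX c p) x = mono_at x c * meval p x.
Proof.
have s_uniq : uniq (map (fun a => mmul a c) (msupp p)).
  by rewrite map_inj_uniq ?undup_uniq //; apply: mmul_injl.
have supp_s m : coef (mulX c p) m != 0 -> m \in map (fun a => mmul a c) (msupp p).
  rewrite coef_mulX; case: ifP => [cm pm|_]; last by rewrite eqxx.
  by apply/mapP; exists (msub m c); rewrite ?mem_msupp ?msubK.
have supp_p m : coef p m != 0 -> m \in msupp p by rewrite mem_msupp.
rewrite (meval_seq x s_uniq supp_s) big_map (meval_seq x (undup_uniq _) supp_p).
by rewrite mulr_sumr; apply: eq_bigr => m _; rewrite coef_mulX_mmul mono_at_mmul mulrA [LHS]mulrC.
Qed.

Lemma one_fin :
  exists s : seq (mono n), forall m, (if m == mone n then 1 else 0 : F) != 0 -> m \in s.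
Proof.
by exists [:: mone n] => m; case: (eqVneq m (mone n)) => [->|_]; rewrite ?mem_head ?eqxx.
Qed.

Definition mpoly1 : mpoly n F := MPoly one_fin.

Lemma meval1 x : meval mpoly1 x = 1.
Proof.
have supp m : coef mpoly1 m != 0 -> m \in [:: mone n].
  by rewrite /=; case: (eqVneq m (mone n)) => [->|_]; rewrite ?mem_head ?eqxx.
rewrite (meval_seq x (isT : uniq [:: mone n]) supp) big_seq1 /= eqxx mul1r.
by rewrite /mono_at big1 // => i _; rewrite tnth_mktuple expr0.
Qed.

Lemma exists_separating_mpoly (S : seq 'rV[F]_n) h :
  h \notin S -> exists2 P : mpoly n F, vanishes S P & meval P h != 0.
Proof.
elim: S => [_|t S IH]; first by exists mpoly1; rewrite // meval1 oner_eq0.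
rewrite in_cons negb_or => /andP [ht /IH [P PS Ph]].
have [i ti] : exists i, t ord0 i != h ord0 i.
  apply: NNPP => same; move: ht; rewrite eq_sym; suff -> : t = h by rewrite eqxx.
  by apply/rowP => j; apply/eqP; apply: NNPP => tj; apply: same; exists j; apply/negP.
pose Q := lin 1 (- t ord0 i) (mulX (munit i) P) P.
have evalQ x : meval Q x = (x ord0 i - t ord0 i) * meval P x.
  by rewrite meval_lin meval_mulX mono_at_munit mul1r mulNr -mulrBl.
exists Q; last by rewrite evalQ mulf_neq0 // subr_eq0 eq_sym.
move=> s; rewrite in_cons evalQ => /orP [/eqP->|sS]; first by rewrite subrr mul0r.
by rewrite PS ?mulr0.
Qed.

End Polynomials.

(** * Term orders *)

Section TermOrder.
Variables (n : nat) (lt : rel (mono n)).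
Hypothesis lt_term : term_order lt.

Let lt_irr : irreflexive lt. Proof. by case: lt_term. Qed.
Let lt_trans : transitive lt. Proof. by case: lt_term. Qed.

Lemma lt_asym a b : lt a b -> lt b a -> False.
Proof. by move=> ab /(lt_trans ab); rewrite lt_irr. Qed.

Lemma eq_or_lt_lt_trans a b c : a = b \/ lt a b -> lt b c -> lt a c.
Proof. by case=> [->//|/lt_trans]; apply. Qed.

Lemma mdiv_eq_or_lt a b : mdiv a b -> a = b \/ lt a b.
Proof.
case: lt_term => _ _ _ lt_mul one_min ab.
have [ba1|ba1] := eqVneq (msub b a) (mone n).
  by left; rewrite -(msubK ab) ba1 mmulC mmulm1.
by right; have := lt_mul _ _ a (one_min _ ba1); rewrite msubK // mmulC mmulm1.
Qed.

Lemma term_order_wf : well_founded (fun a b => lt a b).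
Proof.
move=> m0; apply: NNPP => acc0.
pose nacc := {m | ~ Acc (fun a b => lt a b) m}.
have step (m : nacc) : {m' : nacc | lt (sval m') (sval m)}.
  apply: constructive_indefinite_description; case: m => m /= accN.
  apply: NNPP => no_pred; apply: accN; constructor => m' m'm.
  by apply: NNPP => accN'; apply: no_pred; exists (exist _ m' accN').
pose s := fix s k := if k is k'.+1 then sval (step (s k')) else exist _ m0 acc0 : nacc.
pose g k := sval (s k).
have g_decr : {homo g : i j / (i < j)%N >-> lt j i}.
  by apply: homo_ltn => [y x z yx zy|k]; [exact: lt_trans zy yx | exact: svalP (step (s k))].
have [i [j [ij gij]]] := dickson g.
have [gij_eq|gij_lt] := mdiv_eq_or_lt gij; last exact: lt_asym gij_lt (g_decr _ _ ij).
by move: (g_decr _ _ ij); rewrite gij_eq lt_irr.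
Qed.

Lemma lt_max_seq (s : seq (mono n)) : s != [::] ->
  exists2 m, m \in s & forall m', m' \in s -> m' != m -> lt m' m.
Proof.
have lt_total : forall a b, a != b -> lt a b || lt b a by case: lt_term.
elim: s => [//|a s IH] _; have [->|/IH [m ms m_max]] := eqVneq s [::].
  by exists a; rewrite ?mem_head // => m'; rewrite mem_seq1 => /eqP->; rewrite eqxx.
have [->|am] := eqVneq a m.
  exists m; first exact: mem_head.
  by move=> m'; rewrite in_cons => /orP [/eqP->|]; [rewrite eqxx | exact: m_max].
case/orP: (lt_total _ _ am) => [lt_am|lt_ma].
  by exists m; rewrite ?in_cons ?ms ?orbT // => m'; rewrite in_cons => /orP [/eqP->|/m_max].
exists a; first exact: mem_head.
move=> m'; rewrite in_cons => /orP [/eqP->|m's]; first by rewrite eqxx.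
by move=> _; have [->//|/(m_max _ m's)/lt_trans] := eqVneq m' m; apply.
Qed.

Variable F : fieldType.
Implicit Types (p q : mpoly n F).

Lemma lead_mono_uniq p m1 m2 : lead_mono lt p m1 -> lead_mono lt p m2 -> m1 = m2.
Proof.
move=> [p1 max1] [p2 max2]; have [//|m12] := eqVneq m1 m2.
by case: (lt_asym (max2 _ p1 m12) (max1 _ p2 _)); rewrite eq_sym.
Qed.

Lemma lead_mono_exists p : (exists m, coef p m != 0) -> exists m, lead_mono lt p m.
Proof.
move=> [m0 pm0]; have : msupp p != [::].
  by apply/eqP => supp0; move: pm0; rewrite -mem_msupp supp0.
case/lt_max_seq => m; rewrite mem_msupp => pm m_max.
by exists m; split => // m'; rewrite -mem_msupp; apply: m_max.
Qed.

Lemma lead_mono_mulX p (c : mono n) mp :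
  lead_mono lt p mp -> lead_mono lt (mulX c p) (mmul mp c).
Proof.
move=> [pmp mp_max]; split; first by rewrite coef_mulX_mmul.
move=> m; rewrite coef_mulX; case: ifP => [cm pm|]; last by rewrite eqxx.
rewrite -(msubK cm) => neq; case: lt_term => _ _ _ lt_mul _; apply: lt_mul.
by apply: (mp_max _ pm); apply: contraNneq neq => ->.
Qed.

Lemma lin_lead_lt (a b : F) p q m m' :
  lead_mono lt p m -> lead_mono lt q m -> coef (lin a b p q) m = 0 ->
  coef (lin a b p q) m' != 0 -> lt m' m.
Proof.
move=> [_ p_max] [_ q_max] m0 m'0; have [m'm|] := eqVneq m' m; first by rewrite m'm m0 eqxx in m'0.
by case/orP: (lin_supp m'0) => [/p_max|/q_max]; apply.
Qed.

Lemma meval_neq0_lead p x : meval p x != 0 -> exists m, lead_mono lt p m.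
Proof. by move/meval_neq0_coef; exact: lead_mono_exists. Qed.

Lemma standard_vanishes_eq0 (S : seq 'rV[F]_n) p :
  (forall m, coef p m != 0 -> standard_mono lt S m) -> vanishes S p -> forall m, coef p m = 0.
Proof.
move=> p_std pS m; apply/eqP; apply: NNPP => /negP pm.
have [ml pml] := lead_mono_exists (ex_intro _ m pm).
exact: p_std _ pml.1 p pS pml.
Qed.

End TermOrder.

(** * Groebner bases *)

Lemma In_nth (T : Type) (z : T) (s : seq T) x :
  List.In x s -> exists2 k, (k < size s)%N & nth z s k = x.
Proof. by elim: s => [//|a s IH] /= [->|/IH [k ks <-]]; [exists 0%N | exists k.+1]. Qed.

Lemma nth_In (T : Type) (z : T) (s : seq T) k : (k < size s)%N -> List.In (nth z s k) s.
Proof. by elim: s k => [//|a s IH] [|k] /=; [left | rewrite ltnS => /IH; right]. Qed.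

Section Groebner.
Variables (F : fieldType) (n : nat) (lt : rel (mono n)).
Hypothesis lt_term : term_order lt.
Variables (Fs : seq 'rV[F]_n) (gs : seq (mpoly n F)).

Section Division.
Hypothesis gs_groebner : groebner lt Fs gs.

(* Division by gs: subtracting a multiple of a basis element that vanishes at x
   lowers the leading monomial without changing the value at x. *)
Lemma groebner_nonvanishing_below (x : 'rV[F]_n) f mf :
  vanishes Fs f -> lead_mono lt f mf -> meval f x != 0 ->
  exists g mg, [/\ List.In g gs, lead_mono lt g mg, mg = mf \/ lt mg mf & meval g x != 0].
Proof.
elim/(well_founded_ind (term_order_wf lt_term)): mf f => mf IH f fFs f_mf fx.
have [g gs_g [mf' [mg [f_mf' g_mg mg_mf]]]] := gs_groebner.2 f fFs (ex_intro _ mf f_mf.1).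
rewrite (lead_mono_uniq lt_term f_mf' f_mf) in mg_mf.
have [gx|gx] := eqVneq (meval g x) 0; last first.
  by exists g, mg; move: (mdiv_eq_or_lt lt_term mg_mf).
pose c := msub mf mg.
pose f' := lin 1 (- (coef f mf / coef g mg)) f (mulX c g).
have mg_c : mmul mg c = mf by rewrite mmulC msubK.
have cg_mf : lead_mono lt (mulX c g) mf by rewrite -mg_c; apply: (lead_mono_mulX lt_term c g_mg).
have f'x : meval f' x != 0 by rewrite meval_lin meval_mulX gx !mulr0 addr0 mul1r.
have f'Fs : vanishes Fs f'.
  by move=> t tFs; rewrite meval_lin meval_mulX fFs ?gs_groebner.1 // !mulr0 addr0.
have [mr f'_mr] := meval_neq0_lead lt_term f'x.
have mr_mf : lt mr mf.
  apply: (lin_lead_lt f_mf cg_mf _ f'_mr.1).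
  rewrite coef_lin -{3}mg_c coef_mulX_mmul mul1r mulNr divfK ?subrr //.
  exact: g_mg.1.
have [g' [mg' [gs_g' g'_mg' mg'_mr g'x]]] := IH mr mr_mf f' f'Fs f'_mr f'x.
by exists g', mg'; split=> //; right; apply: eq_or_lt_lt_trans mg'_mr mr_mf.
Qed.

Lemma groebner_nonvanishing h : h \notin Fs -> exists2 g, List.In g gs & meval g h != 0.
Proof.
move=> hFs; have [P PFs Ph] := exists_separating_mpoly hFs.
have [mP P_mP] := meval_neq0_lead lt_term Ph.
by have [g [mg [gs_g _ _ gh]]] := groebner_nonvanishing_below PFs P_mP Ph; exists g.
Qed.

End Division.

Section Reduced.
Variable z : mpoly n F.
Hypothesis gs_reduced : reduced_groebner lt Fs gs.

Let gs_groebner : groebner lt Fs gs. Proof. by case: gs_reduced. Qed.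

Lemma reduced_groebner_lead_supp i q m :
  (i < size gs)%N -> coef (nth z gs i) m != 0 -> vanishes Fs q -> lead_mono lt q m ->
  lead_mono lt (nth z gs i) m.
Proof.
case: gs_reduced => _ _ gs_red i_size gi_m qFs q_m.
have [g gs_g [m' [mg [q_m' g_mg mg_m]]]] := gs_groebner.2 q qFs (ex_intro _ m q_m.1).
rewrite (lead_mono_uniq lt_term q_m' q_m) in mg_m.
have [k k_size gk] := In_nth z gs_g; rewrite -gk in g_mg.
have [ik|ik] := eqVneq i k; last first.
  by have := gs_red _ _ z i_size k_size ik _ _ g_mg gi_m; rewrite mg_m.
rewrite -ik in g_mg; have [<-//|mg_lt_m] := mdiv_eq_or_lt lt_term mg_m.
have [->//|mg_neq] := eqVneq m mg.
by case: (lt_asym lt_term mg_lt_m (g_mg.2 m gi_m mg_neq)).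
Qed.

Hypothesis gs_sorted : forall j k mj mk, (j < k)%N -> (k < size gs)%N ->
  lead_mono lt (nth z gs j) mj -> lead_mono lt (nth z gs k) mk -> lt mj mk.

Variables (h : 'rV[F]_n) (i : nat).
Hypotheses (i_size : (i < size gs)%N) (gih : meval (nth z gs i) h != 0)
  (before_i : forall j, (j < i)%N -> meval (nth z gs j) h = 0).

Lemma first_nonvanishing_standard m :
  coef (nth z gs i) m != 0 -> standard_mono lt (h :: Fs) m.
Proof.
move=> gi_m q qT q_m.
have qFs : vanishes Fs q by move=> t tFs; apply: qT; rewrite in_cons tFs orbT.
have gi_lead := reduced_groebner_lead_supp i_size gi_m qFs q_m.
case: gs_reduced => -[gs_Fs _] gs_monic _.
have [mi [gi_mi gi_monic]] := gs_monic _ (nth_In z i_size).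
rewrite -(lead_mono_uniq lt_term gi_lead gi_mi) {mi gi_mi} in gi_monic.
pose r := lin 1 (- coef q m) q (nth z gs i).
have rFs : vanishes Fs r.
  by move=> t tFs; rewrite meval_lin qFs ?gs_Fs ?mulr0 ?addr0 //; exact: nth_In.
have rh : meval r h != 0.
  rewrite meval_lin qT ?mem_head // mulr0 add0r mulNr oppr_eq0 mulf_neq0 //.
  exact: q_m.1.
have [mr r_mr] := meval_neq0_lead lt_term rh.
have mr_m : lt mr m.
  apply: (lin_lead_lt q_m gi_lead _ r_mr.1).
  by rewrite coef_lin gi_monic mulr1 mul1r subrr.
have [g [mk [gs_g g_mk mk_mr gh]]] := groebner_nonvanishing_below gs_groebner rFs r_mr rh.
have mk_m : lt mk m := eq_or_lt_lt_trans lt_term mk_mr mr_m.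
have [k k_size gk] := In_nth z gs_g; rewrite -gk in g_mk gh.
case: (ltngtP k i) => [ki|ik|ki]; first by rewrite before_i ?eqxx in gh.
  exact: (lt_asym lt_term (gs_sorted ik k_size gi_lead g_mk) mk_m).
rewrite ki in g_mk; rewrite (lead_mono_uniq lt_term g_mk gi_lead) in mk_m.
exact: (lt_asym lt_term mk_m mk_m).
Qed.

End Reduced.
End Groebner.

Unset Implicit Arguments. Set Strict Implicit.

Theorem mainTheorem5 (F : fieldType) (n : nat) (lt : rel (mono n))
  (Fs : seq 'rV[F]_n) (h : 'rV[F]_n) (gs : seq (mpoly n F)) (z : mpoly n F) :
  term_order lt ->
  h \notin Fs ->
  reduced_groebner lt Fs gs ->
  (forall j k mj mk, (j < k)%N -> (k < size gs)%N ->
     lead_mono lt (nth z gs j) mj -> lead_mono lt (nth z gs k) mk -> lt mj mk) ->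
  let T := h :: Fs in
  let chi := fun t : 'rV[F]_n => if t == h then 1 else 0 : F in
  exists i : nat,
    [/\ [/\ (i < size gs)%N,
        meval (nth z gs i) h != 0 &
        (forall j, (j < i)%N -> meval (nth z gs j) h = 0)],
        (forall t, t \in T -> (meval (nth z gs i) h)^-1 * meval (nth z gs i) t = chi t),
        (forall m, coef (nth z gs i) m != 0 -> standard_mono lt T m) &
        forall p : mpoly n F,
           (forall m, coef p m != 0 -> standard_mono lt T m) ->
           (forall t, t \in T -> meval p t = chi t) ->
           forall m, coef p m = (meval (nth z gs i) h)^-1 * coef (nth z gs i) m].
Proof.
move=> lt_term hFs gs_reduced gs_sorted T chi.
have [gs_groebner _ _] := gs_reduced.
pose i := find (fun g => meval g h != 0) gs.
have has_i : has (fun g => meval g h != 0) gs.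
  have [g /(In_nth z) [k k_size <-] gh] := groebner_nonvanishing lt_term gs_groebner hFs.
  by apply/(has_nthP z); exists k.
have i_size : (i < size gs)%N by rewrite -has_find.
have gih : meval (nth z gs i) h != 0 := nth_find z has_i.
have before_i j : (j < i)%N -> meval (nth z gs j) h = 0 by move/(before_find z)/negbFE/eqP.
have gi_std := first_nonvanishing_standard lt_term gs_reduced gs_sorted i_size gih before_i.
have gi_chi t : t \in T -> (meval (nth z gs i) h)^-1 * meval (nth z gs i) t = chi t.
  rewrite /chi in_cons; have [->|th] := eqVneq t h; first by rewrite mulVf.
  by move=> tFs; rewrite (gs_groebner.1 _ (nth_In z i_size) t tFs) mulr0.
exists i; split=> // p p_std p_chi m; apply/eqP; rewrite -subr_eq0.
pose r := lin 1 (- (meval (nth z gs i) h)^-1) p (nth z gs i).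
have r_std m' : coef r m' != 0 -> standard_mono lt T m'.
  by case/lin_supp/orP; [exact: p_std | exact: gi_std].
have rT : vanishes T r by move=> t tT; rewrite meval_lin p_chi // -gi_chi // mul1r mulNr subrr.
by have := standard_vanishes_eq0 lt_term r_std rT m; rewrite coef_lin mul1r mulNr => ->.
Qed.
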